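(* Let $\phi_+,\phi_-,\psi_+,\psi_-$ be unit vectors in $\mathbb{C}^2$ such that $0 < |\langle\phi_+,\phi_-\rangle| < 1$. Then there exists a unitary matrix $U$ such that $U\phi_+ = \psi_-$ and $U\phi_-$ is proportional neither to $\psi_+$ nor to $\psi_-$.
   Context: $\langle\cdot,\cdot\rangle$ denotes the standard Hermitian inner product on $\mathbb{C}^2$. *)

From HB Require Import structures.
From mathcomp Require Import all_boot all_order all_algebra.
From mathcomp Require Import complex reals.
Set Implicit Arguments. Unset Strict Implicit. Unset Printing Implicit Defensive.
Import Order.TTheory GRing.Theory Num.Theory.
Local Open Scope ring_scope.

Definition hinner (R : rcfType) (n : nat) (u v : 'cV[R[i]]_n) : R[i] :=
  \sum_(k < n) (u k 0)^* * v k 0.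

Definition adjmx (R : rcfType) (m n : nat) (A : 'M[R[i]]_(m, n)) : 'M[R[i]]_(n, m) :=
  (map_mx (fun z => z^*) A)^T.

Definition unitary_mx (R : rcfType) (n : nat) (U : 'M[R[i]]_n) : Prop :=
  adjmx U *m U = 1%:M.

Definition unit_vec (R : rcfType) (n : nat) (u : 'cV[R[i]]_n) : Prop :=
  hinner u u = 1.

Definition proportional (R : rcfType) (n : nat) (u v : 'cV[R[i]]_n) : Prop :=
  exists c : R[i], u = c *: v.

From HB Require Import structures.
From mathcomp Require Import all_boot all_order all_algebra.
From mathcomp Require Import complex reals.
From mathcomp Require Import ring.
Import Order.TTheory GRing.Theory Num.Theory.
Local Open Scope ring_scope.
Set Implicit Arguments. Unset Strict Implicit.

(* Write u^perp for the unit vector orthogonal to a unit vector u of C^2.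
   For |l| = 1 the matrix U = psim phip^* + l psim^perp (phip^perp)^* is
   unitary, maps phip to psim, and sends phim to s psim + l t psim^perp, where
   s = <phip, phim> and t = <phip^perp, phim>.  Lagrange's identity
   |s|^2 + |t|^2 = 1 and |s| < 1 give t <> 0, so U phim is never proportional
   to psim.  It is proportional to psip only if t <psim, psip> equals
   l^* s <psim^perp, psip>; as s, t <> 0 and <psim, psip>, <psim^perp, psip>
   do not both vanish, one of l = 1, l = -1 avoids this. *)

Section HermitianProduct.
Variables (R : rcfType) (n : nat).
Local Notation C := R[i].
Implicit Types (u v w : 'cV[C]_n) (a : C).

Lemma adjmxK m p (A : 'M[C]_(m, p)) : adjmx (adjmx A) = A.
Proof. by apply/matrixP => i j; rewrite !mxE conjCK. Qed.

Lemma adjmxD m p (A B : 'M[C]_(m, p)) : adjmx (A + B) = adjmx A + adjmx B.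
Proof. by apply/matrixP => i j; rewrite !mxE rmorphD. Qed.

Lemma adjmxM m p q (A : 'M[C]_(m, p)) (B : 'M[C]_(p, q)) :
  adjmx (A *m B) = adjmx B *m adjmx A.
Proof. by rewrite /adjmx map_mxM trmx_mul. Qed.

Lemma adjmx_mulmx u v : adjmx u *m v = (hinner u v)%:M.
Proof.
apply/matrixP => i j; rewrite !ord1 !mxE /=.
by apply: eq_bigr => k _; rewrite !mxE.
Qed.

Lemma hinnerC u v : hinner v u = (hinner u v)^*.
Proof.
rewrite /hinner rmorph_sum; apply: eq_bigr => k _.
by rewrite rmorphM /= conjCK mulrC.
Qed.

Lemma hinnerDr u v w : hinner u (v + w) = hinner u v + hinner u w.
Proof. by rewrite /hinner -big_split; apply: eq_bigr => k _; rewrite mxE mulrDr. Qed.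

Lemma hinnerZr u v a : hinner u (a *: v) = a * hinner u v.
Proof. by rewrite /hinner mulr_sumr; apply: eq_bigr => k _; rewrite mxE mulrCA. Qed.

Lemma hinnerZl u v a : hinner (a *: u) v = a^* * hinner u v.
Proof. by rewrite hinnerC hinnerZr rmorphM /= -hinnerC. Qed.

Definition outer u v : 'M[C]_n := u *m adjmx v.

Lemma outer_mulmx u v w : outer u v *m w = hinner v w *: u.
Proof. by rewrite /outer -mulmxA adjmx_mulmx mul_mx_scalar. Qed.

Lemma adjmx_outer u v : adjmx (outer u v) = outer v u.
Proof. by rewrite /outer adjmxM adjmxK. Qed.

Lemma outerM u v u' v' : outer u v *m outer u' v' = hinner v u' *: outer u v'.
Proof. by rewrite /outer mulmxA outer_mulmx scalemxAl. Qed.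

Section OrthonormalPair.
Variables f1 f2 : 'cV[C]_n.
Hypotheses (f1_unit : unit_vec f1) (f2_unit : unit_vec f2).
Hypothesis f12_orth : hinner f1 f2 = 0.

Let f21_orth : hinner f2 f1 = 0.
Proof. by rewrite hinnerC f12_orth conjC0. Qed.

Lemma orthonormal_pair_unitary e1 e2 :
  outer e1 e1 + outer e2 e2 = 1%:M -> unitary_mx (outer f1 e1 + outer f2 e2).
Proof.
move=> e_complete; rewrite /unitary_mx adjmxD !adjmx_outer mulmxDl !mulmxDr !outerM.
by rewrite f1_unit f2_unit f12_orth f21_orth !scale0r addr0 add0r !scale1r.
Qed.

Lemma proportional_orthonormal_comb a b w :
  proportional (a *: f1 + b *: f2) w -> b * hinner f1 w = a * hinner f2 w.
Proof.
move=> [c comb_eq].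
have /(congr1 (hinner f1)) := comb_eq; have /(congr1 (hinner f2)) := comb_eq.
rewrite !hinnerDr !hinnerZr f1_unit f2_unit f12_orth f21_orth.
rewrite !mulr0 !mulr1 addr0 add0r => -> ->; exact: mulrAC.
Qed.

End OrthonormalPair.

End HermitianProduct.

Lemma exists_unimodular_neq (C : numClosedFieldType) (x y : C) :
  (x != 0) || (y != 0) -> exists l : C, l^* * l = 1 /\ x != l^* * y.
Proof.
case: (eqVneq x y) => [<-|x_neq_y]; last by exists 1; rewrite conjC1 !mul1r.
rewrite orbb => x_neq0; exists (-1); rewrite rmorphN1 mulN1r opprK; split => //.
by rewrite mulN1r eq_sym eqNr.
Qed.

Section Dimension2.
Variable R : rcfType.
Local Notation C := R[i].
Implicit Types u v : 'cV[C]_2.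

Lemma ord2_cases (i : 'I_2) : i = 0 \/ i = 1.
Proof. by case: i => [[|[|//]] ?]; [left | right]; apply: val_inj. Qed.

Lemma hinner2 u v : hinner u v = (u 0 0)^* * v 0 0 + (u 1 0)^* * v 1 0.
Proof.
have lift01 : lift ord0 ord0 = 1 :> 'I_2 by apply: val_inj.
by rewrite /hinner big_ord_recl big_ord1 lift01.
Qed.

Definition perp2 u : 'cV[C]_2 :=
  \col_(i < 2) (if i == 0 then - (u 1 0)^* else (u 0 0)^*).

Lemma hinner_perp2r u : hinner u (perp2 u) = 0.
Proof. by rewrite hinner2 !mxE /=; ring. Qed.

Lemma hinner_perp2l u : hinner (perp2 u) u = 0.
Proof. by rewrite hinnerC hinner_perp2r conjC0. Qed.

Lemma hinner_perp2_perp2 u : hinner (perp2 u) (perp2 u) = hinner u u.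
Proof. by rewrite !hinner2 !mxE /= rmorphN /= !conjCK; ring. Qed.

Lemma outer_perp2 u : outer u u + outer (perp2 u) (perp2 u) = (hinner u u)%:M.
Proof.
apply/matrixP => i j; rewrite hinner2 !mxE !big_ord1 !mxE.
by case: (ord2_cases i) => ->; case: (ord2_cases j) => -> /=;
  rewrite ?rmorphN /= ?conjCK; ring.
Qed.

Lemma lagrange2 u v :
  `|hinner u v| ^+ 2 + `|hinner (perp2 u) v| ^+ 2 = hinner u u * hinner v v.
Proof.
have := congr1 (fun A => hinner v (A *m v)) (outer_perp2 u).
rewrite /= mulmxDl !outer_mulmx mul_scalar_mx hinnerDr !hinnerZr => <-.
by rewrite !normCK -!hinnerC.
Qed.

Lemma hinner_perp2_neq0 u v :
  unit_vec u -> unit_vec v -> `|hinner u v| < 1 -> hinner (perp2 u) v != 0.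
Proof.
move=> u_unit v_unit; apply: contraTneq => perp_eq0.
have := lagrange2 u v; rewrite u_unit v_unit mulr1 perp_eq0 normr0 expr0n addr0.
by move=> /eqP; rewrite sqrp_eq1 // => /eqP ->; rewrite ltxx.
Qed.

Lemma hinner_or_perp2_neq0 u v :
  unit_vec u -> unit_vec v -> (hinner u v != 0) || (hinner (perp2 u) v != 0).
Proof.
move=> u_unit v_unit; have := lagrange2 u v; rewrite u_unit v_unit mulr1.
case: eqP => [->|//]; case: eqP => [->|//].
by rewrite normr0 expr0n addr0 => /eqP; rewrite eq_sym oner_eq0.
Qed.

End Dimension2.

Theorem lemma11 (R : realType) (phip phim psip psim : 'cV[R[i]]_2) :
  unit_vec phip -> unit_vec phim -> unit_vec psip -> unit_vec psim ->
  0 < `|hinner phip phim| -> `|hinner phip phim| < 1 ->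
  exists U : 'M[R[i]]_2,
    unitary_mx U /\ U *m phip = psim /\
    ~ proportional (U *m phim) psip /\ ~ proportional (U *m phim) psim.
Proof.
move=> phip_unit phim_unit psip_unit psim_unit s_gt0 s_lt1.
set s := hinner phip phim in s_gt0 s_lt1.
pose t := hinner (perp2 phip) phim.
have t_neq0 : t != 0 by apply: hinner_perp2_neq0.
have s_neq0 : s != 0 by rewrite -normr_gt0.
pose P := hinner psim psip; pose Q := hinner (perp2 psim) psip.
have tP_or_sQ : (t * P != 0) || (s * Q != 0).
  rewrite !mulf_eq0 (negPf t_neq0) (negPf s_neq0); exact: hinner_or_perp2_neq0.
have [l [l_unimodular tP_neq]] := exists_unimodular_neq tP_or_sQ.
pose f2 := l *: perp2 psim.
have f2_unit : unit_vec f2.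
  by rewrite /unit_vec hinnerZl hinnerZr hinner_perp2_perp2 psim_unit mulr1.
have psim_f2_orth : hinner psim f2 = 0 by rewrite hinnerZr hinner_perp2r mulr0.
have f2_psim_orth : hinner f2 psim = 0 by rewrite hinnerZl hinner_perp2l mulr0.
exists (outer psim phip + outer f2 (perp2 phip)).
have U_phim : (outer psim phip + outer f2 (perp2 phip)) *m phim = s *: psim + t *: f2.
  by rewrite mulmxDl !outer_mulmx.
split; [|split; [|split]].
- by apply: orthonormal_pair_unitary; rewrite // outer_perp2 phip_unit.
- rewrite mulmxDl !outer_mulmx phip_unit hinner_perp2l.
  by rewrite scale0r addr0 scale1r.
- rewrite U_phim => /(proportional_orthonormal_comb psim_unit f2_unit psim_f2_orth).
  by rewrite hinnerZl -/P -/Q mulrCA => /eqP; rewrite (negPf tP_neq).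
- rewrite U_phim => /(proportional_orthonormal_comb psim_unit f2_unit psim_f2_orth).
  by rewrite psim_unit f2_psim_orth mulr1 mulr0 => /eqP; rewrite (negPf t_neq0).
Qed.
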